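(* For every integers $d \geq 2$ and $s \geq 1$, $\mathsf U_{d,s}\subseteq\mathsf O_{d,2s}$.
   Context: For integers $d\ge2$, $s\ge1$ and $U\in M_{ds}(\mathbb C)$ viewed as a $d\times d$ block matrix with blocks $U_{ij}\in M_s(\mathbb C)$, set $\phi_{d,s}(U)=\big(\tfrac1s\|U_{ij}\|_F^2\big)_{i,j=1}^d$ with $\|X\|_F=\operatorname{Tr}(XX^* )^{1/2}$. Define $\mathsf U_{d,s}:=\phi_{d,s}(\mathcal U(ds))$, where $\mathcal U(n)$ is the unitary group, and $\mathsf O_{d,s}:=\phi_{d,s}(\mathcal O(ds))$, where $\mathcal O(n)$ is the group of $n\times n$ real orthogonal matrices. *)

From HB Require Import structures.
From mathcomp Require Import all_boot all_order all_algebra.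
From mathcomp Require Import spectral.
From mathcomp Require Import complex.
From mathcomp Require Import reals.
Set Implicit Arguments. Unset Strict Implicit. Unset Printing Implicit Defensive.
Import Order.TTheory GRing.Theory Num.Theory.
Local Open Scope ring_scope.

Lemma blk_ord_proof (d s : nat) (i : 'I_d) (k : 'I_s) : (i * s + k < d * s)%N.
Proof.
have hi := ltn_ord i; have hk := ltn_ord k.
apply: (@leq_trans (i.+1 * s)%N); first by rewrite mulSn [X in (_ < X)%N]addnC ltn_add2l.
by rewrite leq_mul2r hi orbT.
Qed.

Definition blk_ord (d s : nat) (i : 'I_d) (k : 'I_s) : 'I_(d * s) :=
  Ordinal (blk_ord_proof i k).

Definition phi (C : numDomainType) (d s : nat) (U : 'M[C]_(d * s)) : 'M[C]_d :=
  \matrix_(i < d, j < d)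
    (s%:R^-1 * \sum_(k < s) \sum_(l < s) `|U (blk_ord i k) (blk_ord j l)| ^+ 2).

Definition orthogonal_mx (R : realType) (n : nat) (O : 'M[R]_n) : Prop :=
  O *m O^T = 1%:M.

Definition real_to_complex (R : realType) (x : R) : R[i] := Complex x 0.

Definition in_Uds (R : realType) (d s : nat) (P : 'M[R[i]]_d) : Prop :=
  exists U : 'M[R[i]]_(d * s), U \is unitarymx /\ phi U = P.

Definition in_Ods (R : realType) (d s : nat) (P : 'M[R[i]]_d) : Prop :=
  exists O : 'M[R]_(d * s), orthogonal_mx O /\
    map_mx (@real_to_complex R) (phi O) = P.

(* Replace every entry z of a unitary U by the real 2x2 matrix of multiplication
   by z, placing the 2x2 blocks so that the s x s block (i, j) of U becomes the
   2s x 2s block (i, j) of the real matrix O.  Since this map is a ring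
   morphism sending conjugation to transposition, U U^* = 1 turns into O O^T = 1;
   and each 2x2 block has squared Frobenius norm 2|z|^2, which is exactly
   compensated by the normalisation 1/(2s) in place of 1/s. *)

From HB Require Import structures.
From mathcomp Require Import all_boot all_order all_algebra.
From mathcomp Require Import spectral complex reals.
From mathcomp Require Import ring.
Import GRing.Theory Num.Theory.
Local Open Scope ring_scope.
Local Open Scope sesquilinear_scope.

Section BlockIndex.
Context {m n : nat}.

Lemma blk_width_gt0 (p : 'I_(m * n)) : (0 < n)%N.
Proof. by case: n p => [|n'] [] //; rewrite muln0. Qed.

Lemma blk_idx_proof (p : 'I_(m * n)) : (p %/ n < m)%N.
Proof. by rewrite ltn_divLR ?(blk_width_gt0 p). Qed.

Definition blk_idx (p : 'I_(m * n)) : 'I_m := Ordinal (blk_idx_proof p).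
Definition blk_off (p : 'I_(m * n)) : 'I_n := Ordinal (ltn_pmod p (blk_width_gt0 p)).

Lemma blk_ordK (p : 'I_(m * n)) : blk_ord (blk_idx p) (blk_off p) = p.
Proof. by apply: val_inj; rewrite /= -divn_eq. Qed.

Lemma blk_idxK (i : 'I_m) (k : 'I_n) : blk_idx (blk_ord i k) = i.
Proof.
have n_gt0 : (0 < n)%N := leq_ltn_trans (leq0n k) (ltn_ord k).
by apply: val_inj; rewrite /= divnMDl // divn_small ?addn0.
Qed.

Lemma blk_offK (i : 'I_m) (k : 'I_n) : blk_off (blk_ord i k) = k.
Proof. by apply: val_inj; rewrite /= modnMDl modn_small. Qed.

Variant blk_ord_spec : 'I_(m * n) -> Type :=
  BlkOrd i k : blk_ord_spec (blk_ord i k).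

Lemma blk_ordP p : blk_ord_spec p.
Proof. by rewrite -[p]blk_ordK. Qed.

Lemma blk_ord_eq (i i' : 'I_m) (k k' : 'I_n) :
  (blk_ord i k == blk_ord i' k') = (i == i') && (k == k').
Proof.
apply/idP/andP => [/eqP e | [/eqP-> /eqP->] //].
by rewrite -(blk_idxK i k) -[in k == _](blk_offK i k) e blk_idxK blk_offK !eqxx.
Qed.

Lemma big_blk_ord (T : Type) (idx : T) (op : Monoid.com_law idx)
    (F : 'I_(m * n) -> T) :
  \big[op/idx]_(p < m * n) F p
  = \big[op/idx]_(i < m) \big[op/idx]_(k < n) F (blk_ord i k).
Proof.
rewrite pair_big (reindex (fun ik : 'I_m * 'I_n => blk_ord ik.1 ik.2)) //.
exists (fun p => (blk_idx p, blk_off p)) => [[i k] _ | p _] /=.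
  by rewrite blk_idxK blk_offK.
by rewrite blk_ordK.
Qed.

End BlockIndex.

Section Realify.
Context {R : rcfType}.

(* The matrix of multiplication by z on C = R^2 (column vectors). *)
Definition realify (z : R[i]) : 'M[R]_2 :=
  complex.Re z *: 1%:M + complex.Im z *: (delta_mx 1 0 - delta_mx 0 1).

Lemma ord2P (b : 'I_2) : b = 0 \/ b = 1.
Proof. by case: b => -[|[|//]] ?; [left|right]; apply: val_inj. Qed.

Lemma realify_is_zmod_morphism : zmod_morphism realify.
Proof.
move=> x y; apply/matrixP => b c; rewrite !mxE.
by case: x y => a1 b1 [a2 b2] /=; ring.
Qed.

Lemma realify_is_monoid_morphism : monoid_morphism realify.
Proof.
split.
  apply/matrixP => b c; rewrite !mxE.
  by case: (ord2P b) => ->; case: (ord2P c) => -> /=; ring.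
move=> x y; apply/matrixP => b c; rewrite !mxE !big_ord_recl !big_ord0 !mxE.
by case: x y => a1 b1 [a2 b2]; case: (ord2P b) => ->; case: (ord2P c) => -> /=; ring.
Qed.

HB.instance Definition _ :=
  GRing.isZmodMorphism.Build R[i] 'M[R]_2 realify realify_is_zmod_morphism.
HB.instance Definition _ :=
  GRing.isMonoidMorphism.Build R[i] 'M[R]_2 realify realify_is_monoid_morphism.

Lemma realify_conj (z : R[i]) : realify (Num.conj z) = (realify z)^T.
Proof.
apply/matrixP => b c; rewrite !mxE; case: z => a1 b1 /=.
by case: (ord2P b) => ->; case: (ord2P c) => -> /=; ring.
Qed.

Lemma sum_realify_mul (x y : R[i]) (b b' : 'I_2) :
  \sum_(c < 2) realify x b c * realify y b' c = realify (x * Num.conj y) b b'.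
Proof.
rewrite rmorphM /= realify_conj mxE.
by apply: eq_bigr => c _; rewrite [_^T _ _]mxE.
Qed.

Lemma sum_realify_sqr (z : R[i]) :
  real_complex R (\sum_(b < 2) \sum_(c < 2) realify z b c ^+ 2) = 2 * `|z| ^+ 2.
Proof.
rewrite -add_Re2_Im2 -(rmorph_nat (real_complex R) 2) -rmorphM.
congr (real_complex R _); rewrite !big_ord_recl !big_ord0 !mxE /=.
by case: z => a b /=; ring.
Qed.

End Realify.

Section Realification.
Context {R : realType} {m n : nat}.

(* The real index p = i * 2n + b * n + k stands for the complex index i * n + k
   and for row/column b of the 2x2 block. *)
Definition cplx_idx (p : 'I_(m * (2 * n))) : 'I_(m * n) :=
  blk_ord (blk_idx p) (blk_off (blk_off p)).
Definition reim_idx (p : 'I_(m * (2 * n))) : 'I_2 := blk_idx (blk_off p).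

Definition realify_mx (U : 'M[R[i]]_(m * n)) : 'M[R]_(m * (2 * n)) :=
  \matrix_(p, q) realify (U (cplx_idx p) (cplx_idx q)) (reim_idx p) (reim_idx q).

Lemma realify_mxE U i b k j c l :
  realify_mx U (blk_ord i (blk_ord b k)) (blk_ord j (blk_ord c l))
  = realify (U (blk_ord i k) (blk_ord j l)) b c.
Proof. by rewrite mxE /cplx_idx /reim_idx !(blk_idxK, blk_offK). Qed.

Lemma realify_mx_orthogonal U : U \is unitarymx -> orthogonal_mx (realify_mx U).
Proof.
move=> /unitarymxP UU; apply/matrixP => p q.
case/blk_ordP: p => i k; case/blk_ordP: k => b k.
case/blk_ordP: q => j l; case/blk_ordP: l => c l.
transitivity (realify ((U *m U ^t* ) (blk_ord i k) (blk_ord j l)) b c).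
  rewrite [LHS]mxE [(U *m _) _ _]mxE raddf_sum summxE !big_blk_ord.
  apply: eq_bigr => i' _.
  rewrite big_blk_ord exchange_big; apply: eq_bigr => l' _.
  rewrite [(U ^t* ) _ _]mxE /= -sum_realify_mul; apply: eq_bigr => c' _.
  by rewrite [(realify_mx U)^T _ _]mxE [U^T _ _]mxE !realify_mxE.
rewrite UU !mxE !blk_ord_eq.
by case: (i == j) (k == l) (b == c) => [] [] [] /=; ring.
Qed.

Lemma phi_realify_mx U :
  map_mx (@real_to_complex R) (phi (realify_mx U)) = phi U.
Proof.
apply/matrixP => i j; rewrite !mxE.
have -> : \sum_(k < 2 * n) \sum_(l < 2 * n)
    `|realify_mx U (blk_ord i k) (blk_ord j l)| ^+ 2
  = \sum_(k < n) \sum_(l < n) \sum_(b < 2) \sum_(c < 2)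
      realify (U (blk_ord i k) (blk_ord j l)) b c ^+ 2.
  rewrite big_blk_ord exchange_big; apply: eq_bigr => k _.
  under eq_bigr do rewrite big_blk_ord exchange_big.
  rewrite exchange_big; apply: eq_bigr => l _.
  apply: eq_bigr => b _; apply: eq_bigr => c _.
  by rewrite realify_mxE real_normK ?num_real.
rewrite (_ : @real_to_complex R = real_complex R) // rmorphM fmorphV rmorph_nat.
rewrite raddf_sum; under eq_bigr do rewrite raddf_sum.
under eq_bigr do under eq_bigr do rewrite /= sum_realify_sqr.
under eq_bigr do rewrite -mulr_sumr.
by rewrite -mulr_sumr natrM invfM mulrACA mulVf ?mul1r // pnatr_eq0.
Qed.

End Realification.

Theorem proposition4p2 (R : realType) (d s : nat) (hd : (2 <= d)%N) (hs : (1 <= s)%N)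
  (P : 'M[R[i]]_d) : @in_Uds R d s P -> @in_Ods R d (2 * s) P.
Proof.
case=> U [U_unitary <-]; exists (realify_mx U).
by split; [exact: realify_mx_orthogonal | exact: phi_realify_mx].
Qed.
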